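(* For no $a_0,a_3\in\mathbb{C}$ is the third-order recursion $$z_n = \frac{a_3 z_{n-3} + z_{n-1} + a_0}{z_{n-3}}$$ periodic with period $8$, and for no $a_0,a_3\in\mathbb{C}$ is it periodic with period $12$.
   Context: Let $z_1,z_2,z_3$ be independent indeterminates over $\mathbb{C}$ and define $z_n\in\mathbb{C}(z_1,z_2,z_3)$ for $n\ge4$ by the recursion. A third-order recursion is periodic with period $k$ if all iterates are well-defined elements of $\mathbb{C}(z_1,z_2,z_3)$ (no denominator identically zero) and $z_{k+1}=z_1$, $z_{k+2}=z_2$, $z_{k+3}=z_3$. *)

From HB Require Import structures.
From mathcomp Require Import all_boot all_order all_algebra.
From mathcomp Require Import Rstruct.
From mathcomp Require Import complex fraction.
Set Implicit Arguments. Unset Strict Implicit. Unset Printing Implicit Defensive.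
Import Order.TTheory GRing.Theory Num.Theory.
Local Open Scope ring_scope.

Definition C : fieldType := (Rdefinitions.R)[i].

(* polynomial ring C[z1,z2,z3] as {poly {poly {poly C}}} *)
Definition P3 : idomainType := {poly {poly {poly C}}}.
Definition F3 : fieldType := {fraction P3}.

Definition emb (p : P3) : F3 := @FracField.tofrac P3 p.

Definition cst (c : C) : F3 := emb ((c%:P)%:P)%:P.
Definition Z1 : F3 := emb (('X)%:P)%:P.
Definition Z2 : F3 := emb ('X)%:P.
Definition Z3 : F3 := emb 'X.

(* iterates, 0-indexed: zseq n = z_{n+1};  z_n = (a3 z_{n-3} + z_{n-1} + a0)/z_{n-3} *)
Fixpoint zseq3 (a0 a3 : C) (n : nat) : F3 * F3 * F3 :=
  match n with
  | 0%N => (Z1, Z2, Z3)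
  | n'.+1 => let: (x, y, w) := zseq3 a0 a3 n' in
             (y, w, (cst a3 * x + w + cst a0) / x)
  end.
Definition zseq (a0 a3 : C) (n : nat) : F3 := (zseq3 a0 a3 n).1.1.

(* all iterates well defined: every denominator z_{n-3} (n >= 4) is nonzero *)
Definition well_defined (a0 a3 : C) : Prop := forall n, zseq a0 a3 n != 0.

Definition periodic_with (a0 a3 : C) (k : nat) : Prop :=
  well_defined a0 a3 /\
  [/\ zseq a0 a3 k = zseq a0 a3 0, zseq a0 a3 k.+1 = zseq a0 a3 1
    & zseq a0 a3 k.+2 = zseq a0 a3 2].

From mathcomp Require Import all_boot all_algebra.
From mathcomp Require Import Rstruct complex fraction ring.
Set Implicit Arguments. Unset Strict Implicit. Unset Printing Implicit Defensive.
Import GRing.Theory Num.Theory.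
Local Open Scope ring_scope.

(* Write the iterates over C(z1,z2,z3) as quotients of polynomials. If the
   recursion had period k, specialising (z1,z2,z3) to a polynomial curve u(t)
   whose orbit at t = 0 stays defined would give an orbit that is periodic up
   to first order in t. Along u(t) = (x, x, x + t), with x a nonzero fixed point
   (x^2 = (a3 + 1) x + a0), the first-order part follows the linear recursion
   e_{n+3} = e_{n+2} / x - (x + a0) / x^2 e_n, so its k-th iterate from (0,0,1)
   must come back to (0,0,1). For k = 8 and 12 that makes two polynomials in
   1/x and (x + a0)/x^2 vanish together, which a Bezout identity rules out.
   A nonzero fixed point exists unless a0 = 0 and a3 = -1; in that case the
   rational orbit of (-3,-2,-1) is defined for twelve steps and is back at its
   start at neither step 8 nor step 12. *)

Definition map3 (T U : Type) (f : T -> U) (t : T * T * T) : U * U * U :=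
  let: (x1, x2, x3) := t in (f x1, f x2, f x3).

Definition rel3 (T U : Type) (P : T -> U -> Prop) (t : T * T * T) (u : U * U * U) :=
  let: (x1, x2, x3) := t in let: (y1, y2, y3) := u in
  [/\ P x1 y1, P x2 y2 & P x3 y3].

Definition map_pair (T U : Type) (f : T -> U) (p : T * T) : U * U := (f p.1, f p.2).

Lemma map3_inj (T U : Type) (f : T -> U) : injective f -> injective (map3 f).
Proof. by move=> f_inj [[x1 x2] x3] [[y1 y2] y3] [/f_inj-> /f_inj-> /f_inj->]. Qed.

Lemma rel3_map_impl (T U T' U' : Type) (P : T' -> U' -> Prop) (Q : T -> U -> Prop)
    (f : T -> T') (g : U -> U') t u :
  (forall x y, P (f x) (g y) -> Q x y) -> rel3 P (map3 f t) (map3 g u) -> rel3 Q t u.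
Proof. by move=> PQ; case: t u => [[? ?] ?] [[? ?] ?] [/PQ ? /PQ ? /PQ ?]. Qed.

Definition rec_step (K : fieldType) (b0 b3 : K) (t : K * K * K) : K * K * K :=
  let: (x, y, w) := t in (y, w, (b3 * x + w + b0) / x).

Lemma iter_rec_step_rmorph (K L : fieldType) (f : {rmorphism K -> L}) b0 b3 n t :
  map3 f (iter n (rec_step b0 b3) t) = iter n (rec_step (f b0) (f b3)) (map3 f t).
Proof.
elim: n => //= n <-; case: (iter n _ t) => [[x y] w] /=.
by rewrite fmorph_div !rmorphD rmorphM.
Qed.

Definition frac_step (R : comNzRingType) (b0 b3 : R) (t : (R * R) * (R * R) * (R * R)) :=
  let: (p, q, r) := t in
  (q, r, ((b3 * p.1 + b0 * p.2) * r.2 + r.1 * p.2, p.1 * r.2)).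

Definition as_frac {R : comNzRingType} (x : R) : R * R := (x, 1).

Lemma iter_frac_step_rmorph (R S : comNzRingType) (f : {rmorphism R -> S}) b0 b3 n t :
  map3 (map_pair f) (iter n (frac_step b0 b3) t)
  = iter n (frac_step (f b0) (f b3)) (map3 (map_pair f) t).
Proof.
elim: n => //= n <-; case: (iter n _ t) => [[p q] r] /=.
by rewrite /map_pair /= !(rmorphD, rmorphM).
Qed.

Lemma map_as_frac (R S : comNzRingType) (f : {rmorphism R -> S}) (t : R * R * R) :
  map3 (map_pair f) (map3 as_frac t) = map3 as_frac (map3 f t).
Proof. by case: t => [[x1 x2] x3]; rewrite /= /map_pair /= rmorph1. Qed.

Definition is_frac (K : fieldType) (x : K) (pq : K * K) := pq.2 != 0 /\ pq.1 = x * pq.2.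

Lemma iter_rec_step_frac (K : fieldType) (b0 b3 : K) z n :
  (forall m, (m < n)%N -> (iter m (rec_step b0 b3) z).1.1 != 0) ->
  rel3 (@is_frac K) (iter n (rec_step b0 b3) z) (iter n (frac_step b0 b3) (map3 as_frac z)).
Proof.
elim: n => [|n IH] nz.
  by case: z {nz} => [[x1 x2] x3]; split; split; rewrite ?oner_neq0 ?mulr1.
have /= := IH (fun m lt_mn => nz m (ltnW lt_mn)); have /= := nz n (ltnSn n).
case: (iter n _ z) => [[x y] w]; case: (iter n _ _) => [[[p1 p2] q] [r1 r2]].
rewrite /is_frac /= => x_neq0 [[p2_neq0 ->] fq [r2_neq0 ->]].
by split=> //; split; [rewrite !mulf_neq0 | field].
Qed.

Section Eval3.
Variables (R : comNzRingType) (u1 u2 u3 : {poly R}).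

Let cm1 : commr_rmorph (@polyC R) u1 := fun _ => mulrC _ _.
Let cm2 : commr_rmorph (horner_morph cm1) u2 := fun _ => mulrC _ _.
Let cm3 : commr_rmorph (horner_morph cm2) u3 := fun _ => mulrC _ _.

Definition eval3 : {rmorphism {poly {poly {poly R}}} -> {poly R}} := horner_morph cm3.

Lemma eval3C c : eval3 c%:P%:P%:P = c%:P.
Proof. by rewrite /eval3 /= horner_morphC /= horner_morphC /= horner_morphC. Qed.

Lemma eval3X1 : eval3 'X%:P%:P = u1.
Proof. by rewrite /eval3 /= horner_morphC /= horner_morphC /= horner_morphX. Qed.

Lemma eval3X2 : eval3 'X%:P = u2.
Proof. by rewrite /eval3 /= horner_morphC /= horner_morphX. Qed.

Lemma eval3X3 : eval3 'X = u3.
Proof. exact: horner_morphX. Qed.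

End Eval3.

Section Jets.
Variables (K : fieldType) (a0 a3 : K).

Definition jet0 (p : {poly K}) : K * K := (p.[0], p^`().[0]).

(* The pair (p, q) stands for the germ of p / q at 0, and [has_jet (p, q) j]
   says that this germ is defined with 1-jet j, in cross-multiplied form. *)
Definition has_jet (pq : {poly K} * {poly K}) (j : K * K) :=
  [/\ pq.2.[0] != 0, pq.1.[0] = j.1 * pq.2.[0]
    & pq.1^`().[0] = j.2 * pq.2.[0] + j.1 * pq.2^`().[0]].

Definition jet_step (s : (K * K) * (K * K) * (K * K)) :=
  let: ((x1, e1), j2, (x3, e3)) := s in
  (j2, (x3, e3), ((a3 * x1 + x3 + a0) / x1, e3 / x1 - (x3 + a0) * e1 / x1 ^+ 2)).

Lemma iter_jet_step_fst n s :
  map3 fst (iter n jet_step s) = iter n (rec_step a0 a3) (map3 fst s).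
Proof. by elim: n => //= n <-; case: (iter n _ s) => [[[x1 e1] j2] [x3 e3]]. Qed.

Lemma has_jet_as_frac u : has_jet (as_frac u) (jet0 u).
Proof. by split; rewrite /= ?hornerC ?oner_neq0 ?derivC ?horner0 ?mulr1 ?mulr0 ?addr0. Qed.

Lemma has_jet_frac_step p q r x1 e1 j2 x3 e3 : x1 != 0 ->
  has_jet p (x1, e1) -> has_jet r (x3, e3) ->
  has_jet (frac_step a0%:P a3%:P (p, q, r)).2 (jet_step ((x1, e1), j2, (x3, e3))).2.
Proof.
case: p r => [p1 p2] [r1 r2] x1_neq0 [/= p2_neq0 ep dp] [/= r2_neq0 er dr].
rewrite /has_jet /= !(derivD, derivM, derivC, hornerD, hornerM, hornerC) ep er dp dr.
by split; [rewrite !mulf_neq0 | field | field].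
Qed.

Lemma iter_jet_step_frac n (u : {poly K} * {poly K} * {poly K}) :
  (forall m, (m < n)%N -> (iter m (rec_step a0 a3) (map3 fst (map3 jet0 u))).1.1 != 0) ->
  rel3 has_jet (iter n (frac_step a0%:P a3%:P) (map3 as_frac u))
               (iter n jet_step (map3 jet0 u)).
Proof.
elim: n => [|n IH] nz.
  by case: u {nz} => [[u1 u2] u3]; split; apply: has_jet_as_frac.
have /= := IH (fun m lt_mn => nz m (ltnW lt_mn)).
have := nz n (ltnSn n); rewrite -iter_jet_step_fst.
case: (iter n jet_step _) => [[[x1 e1] j2] [x3 e3]].
case: (iter n _ _) => [[p q] r] /= x1_neq0 [jp jq jr].
by split=> //; apply: (has_jet_frac_step q j2 x1_neq0).
Qed.

Lemma has_jet_mul u q j : has_jet (u * q, q) j -> j = jet0 u.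
Proof.
case: j => x e [/= q_neq0]; rewrite derivM !hornerD !hornerM => ex.
have <- : u.[0] = x by apply: (mulIf q_neq0).
by move/addIr/(mulIf q_neq0) => <-.
Qed.

End Jets.

Arguments jet0 {K} p.

Definition lin_step (R : nzRingType) (al be : R) (e : R * R * R) : R * R * R :=
  let: (e1, e2, e3) := e in (e2, e3, al * e3 - be * e1).

Lemma iter_jet_step_fixed (K : fieldType) (a0 a3 x : K) n e :
  x != 0 -> x ^+ 2 = (a3 + 1) * x + a0 ->
  iter n (jet_step a0 a3) (map3 (pair x) e)
  = map3 (pair x) (iter n (lin_step x^-1 ((x + a0) / x ^+ 2)) e).
Proof.
move=> x_neq0 fixed; elim: n => //= n ->; case: (iter n _ e) => [[e1 e2] e3] /=.
congr (_, _, (_, _)); last by field.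
by apply: (mulIf x_neq0); rewrite divfK // -expr2 fixed; ring.
Qed.

(* With t = be / al^3, the first two entries of the k-th iterate are al^6 (1 - 4t + t^2) and al^7 (1 - 5t + 3t^2)
   for k = 8, and al^10 (1 - 8t + 15t^2 - 4t^3) and al^11 (1 - 9t + 21t^2 - 10t^3)
   for k = 12; the multipliers are homogenised Bezout cofactors of these
   coprime polynomials in t. *)
Lemma lin_step_certificate8 (R : comNzRingType) (al be : R) :
  3%:R * al ^+ 10
  = al * (29%:R * al ^+ 3 - 21%:R * be) * (iter 8 (lin_step al be) (0, 0, 1)).1.1
    + (7%:R * be - 26%:R * al ^+ 3) * (iter 8 (lin_step al be) (0, 0, 1)).1.2.
Proof. cbn [iter lin_step fst snd]; ring. Qed.

Lemma lin_step_certificate12 (R : comNzRingType) (al be : R) :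
  13%:R * al ^+ 17
  = al * (1635%:R * al ^+ 6 - 6039%:R * al ^+ 3 * be + 3190%:R * be ^+ 2)
      * (iter 12 (lin_step al be) (0, 0, 1)).1.1
    - (1622%:R * al ^+ 6 - 4521%:R * al ^+ 3 * be + 1276%:R * be ^+ 2)
      * (iter 12 (lin_step al be) (0, 0, 1)).1.2.
Proof. cbn [iter lin_step fst snd]; ring. Qed.

Lemma lin_step_not_period8 (K : idomainType) (al be : K) : [pchar K] =i pred0 ->
  al != 0 -> iter 8 (lin_step al be) (0, 0, 1) != (0, 0, 1).
Proof.
move=> /pcharf0P K0 al_neq0; apply/eqP => period.
have /eqP := lin_step_certificate8 al be.
by rewrite period !mulr0 addr0 mulf_eq0 K0 expf_eq0 (negPf al_neq0).
Qed.

Lemma lin_step_not_period12 (K : idomainType) (al be : K) : [pchar K] =i pred0 ->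
  al != 0 -> iter 12 (lin_step al be) (0, 0, 1) != (0, 0, 1).
Proof.
move=> /pcharf0P K0 al_neq0; apply/eqP => period.
have /eqP := lin_step_certificate12 al be.
by rewrite period !mulr0 subr0 mulf_eq0 K0 expf_eq0 (negPf al_neq0).
Qed.

Lemma exists_fixed_point (K : closedFieldType) (a0 a3 : K) :
  (a0 != 0) || (a3 != -1) -> exists2 x : K, x != 0 & x ^+ 2 = (a3 + 1) * x + a0.
Proof.
have [-> /= a3_neq | a0_neq0 _] := eqVneq a0 0.
  by exists (a3 + 1); rewrite ?addr_eq0 // addr0 expr2.
have [x fixed] := @solve_monicpoly K 2 (nth 0 [:: a0; a3 + 1]) isT.
rewrite big_ord_recr big_ord1 /= expr0 expr1 mulr1 addrC in fixed.
exists x => //; apply: contraNneq a0_neq0 => x0.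
by move: fixed; rewrite x0 expr2 !mul0r mulr0 add0r => <-.
Qed.

Lemma zseq3E a0 a3 n :
  zseq3 a0 a3 n = iter n (rec_step (cst a0) (cst a3)) (Z1, Z2, Z3).
Proof. by elim: n => //= n ->. Qed.

Lemma periodic_with_return a0 a3 k :
  periodic_with a0 a3 k -> zseq3 a0 a3 k = (Z1, Z2, Z3).
Proof.
rewrite /periodic_with /zseq /=.
by case: (zseq3 a0 a3 k) => [[x y] w] [_ [/= -> -> ->]].
Qed.

Definition Zpoly : P3 * P3 * P3 := ('X%:P%:P, 'X%:P, 'X).

Lemma periodic_frac a0 a3 k : periodic_with a0 a3 k ->
  rel3 (fun z (pq : P3 * P3) => pq.1 = z * pq.2) Zpoly
    (iter k (frac_step (a0%:P%:P%:P : P3) a3%:P%:P%:P) (map3 as_frac Zpoly)).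
Proof.
move=> per; have [wd _] := per.
have nz m : (iter m (rec_step (cst a0) (cst a3)) (Z1, Z2, Z3)).1.1 != 0.
  by rewrite -zseq3E; exact: wd.
have := iter_rec_step_frac (n := k) (fun m _ => nz m).
have -> : iter k (frac_step (cst a0) (cst a3)) (map3 as_frac (Z1, Z2, Z3))
  = map3 (map_pair (@FracField.tofrac P3))
      (iter k (frac_step (a0%:P%:P%:P : P3) a3%:P%:P%:P) (map3 as_frac Zpoly)).
  by rewrite iter_frac_step_rmorph map_as_frac.
rewrite -zseq3E periodic_with_return // -[(Z1, Z2, Z3)]/(map3 emb Zpoly).
apply: rel3_map_impl => z [p q] [_ /eqP].
by rewrite -rmorphM tofrac_eq => /eqP.
Qed.

Lemma periodic_jet_orbit a0 a3 k (u : {poly C} * {poly C} * {poly C}) :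
  periodic_with a0 a3 k ->
  (forall m, (m < k)%N -> (iter m (rec_step a0 a3) (map3 fst (map3 jet0 u))).1.1 != 0) ->
  iter k (jet_step a0 a3) (map3 jet0 u) = map3 jet0 u.
Proof.
case: u => [[u1 u2] u3] /periodic_frac per /iter_jet_step_frac.
have := iter_frac_step_rmorph (eval3 u1 u2 u3) a0%:P%:P%:P a3%:P%:P%:P k (map3 as_frac Zpoly).
rewrite map_as_frac /= !eval3C eval3X1 eval3X2 eval3X3 => <-.
move: per; case: (iter k _ _) => [[[p1 p2] [q1 q2]] [r1 r2]] /= [-> -> ->].
rewrite /map_pair /= !rmorphM eval3X1 eval3X2 eval3X3.
by case: (iter k _ _) => [[j1 j2] j3] [/has_jet_mul-> /has_jet_mul-> /has_jet_mul->].
Qed.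

Lemma periodic_orbit a0 a3 k (z : C * C * C) : periodic_with a0 a3 k ->
  (forall m, (m < k)%N -> (iter m (rec_step a0 a3) z).1.1 != 0) ->
  iter k (rec_step a0 a3) z = z.
Proof.
have valE : map3 fst (map3 jet0 (map3 polyC z)) = z.
  by case: z => [[x1 x2] x3]; rewrite /= !hornerC.
move=> per; rewrite -{1 2}valE => /(periodic_jet_orbit per).
by rewrite -iter_jet_step_fst => ->.
Qed.

Lemma periodic_tangent a0 a3 k (x : C) : x != 0 -> x ^+ 2 = (a3 + 1) * x + a0 ->
  periodic_with a0 a3 k ->
  iter k (lin_step x^-1 ((x + a0) / x ^+ 2)) (0, 0, 1) = (0, 0, 1).
Proof.
move=> x_neq0 fixed per.
have jetE : map3 jet0 (x%:P, x%:P, x%:P + 'X) = map3 (pair x) (0, 0, 1).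
  by rewrite /= /jet0 derivD derivX !derivC !hornerD hornerX !hornerC add0r addr0.
have nz m : (m < k)%N ->
    (iter m (rec_step a0 a3) (map3 fst (map3 jet0 (x%:P, x%:P, x%:P + 'X)))).1.1 != 0.
  by rewrite jetE -iter_jet_step_fst iter_jet_step_fixed //; case: (iter m _ _) => [[? ?] ?].
have := periodic_jet_orbit per nz.
by rewrite jetE iter_jet_step_fixed //; apply: map3_inj => ? ? [].
Qed.

(* [C] is declared only as a fieldType; the number-field structure that makes
   [ratr] a ring morphism is found on [R[i]]. *)
Lemma periodic_rat_orbit (b0 b3 : rat) k (z : rat * rat * rat) :
  periodic_with (ratr b0) (ratr b3) k ->
  (forall m, (m < k)%N -> (iter m (rec_step b0 b3) z).1.1 != 0) ->
  iter k (rec_step b0 b3) z = z.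
Proof.
pose f : {rmorphism rat -> Rdefinitions.R[i]} := ratr.
move=> per nz; apply: (map3_inj (@fmorph_inj _ _ f)).
rewrite iter_rec_step_rmorph; apply: periodic_orbit per _ => m lt_mk.
rewrite -iter_rec_step_rmorph.
by case: (iter m _ z) (nz m lt_mk) => [[x1 ?] ?] /=; rewrite fmorph_eq0.
Qed.

Lemma degenerate_orbit_neq0 m : (m < 12)%N ->
  (iter m (rec_step (0 : rat) (-1)) (-3, -2, -1)).1.1 != 0.
Proof.
have /allP nz : all (fun m => (iter m (rec_step (0 : rat) (-1)) (-3, -2, -1)).1.1 != 0)
                    (iota 0 12) by vm_compute.
by move=> lt_m12; apply: nz; rewrite mem_iota.
Qed.

Lemma degenerate_periodic_return k : periodic_with 0 (-1) k -> (k <= 12)%N ->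
  iter k (rec_step (0 : rat) (-1)) (-3, -2, -1) = (-3, -2, -1).
Proof.
pose f : {rmorphism rat -> Rdefinitions.R[i]} := ratr.
rewrite -(rmorph0 f) -(rmorphN1 f) => /periodic_rat_orbit ret le_k12; apply: ret.
by move=> m lt_mk; apply: degenerate_orbit_neq0 (leq_trans lt_mk le_k12).
Qed.

Theorem mainTheorem7 (a0 a3 : C) :
  ~ periodic_with a0 a3 8 /\ ~ periodic_with a0 a3 12.
Proof.
have [/andP[/eqP-> /eqP->] | nondeg] := boolP ((a0 == 0) && (a3 == -1)).
  by split=> /degenerate_periodic_return/(_ isT)/eqP; vm_compute.
have [x x_neq0 fixed] : exists2 x : C, x != 0 & x ^+ 2 = (a3 + 1) * x + a0.
  by apply: exists_fixed_point; rewrite -negb_and.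
have C0 : [pchar C] =i pred0 := @pchar_num Rdefinitions.R[i].
have inv_x_neq0 : x^-1 != 0 by rewrite invr_eq0.
split=> /(periodic_tangent x_neq0 fixed)/eqP.
  by apply/negP/lin_step_not_period8.
by apply/negP/lin_step_not_period12.
Qed.
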